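(* Let $g:\{0,1\}^N\to\{0,1\}$ be a total Boolean function. If $g$ can be computed by an $R$-round randomized AMPC algorithm with I/O capacity $S$ and error at most $1/3$, then the approximate degree of $g$ is at most $S^{2R}$.
   Context: AMPC model with I/O capacity $S$: computation proceeds in rounds communicating through distributed data stores (DDS) $\mathcal{D}_0,\dots,\mathcal{D}_R$, each storing under each key a multiset of values (possibly empty; duplicates allowed, each value written by a unique machine). On input $x\in\{0,1\}^N$, $\mathcal{D}_0$ consists of the pairs $(i,x_i)$, $i=1,\dots,N$. In round $r\ge1$ each machine (arbitrarily many, computationally unbounded, deterministic) adaptively queries keys of $\mathcal{D}_{r-1}$, receiving the whole multiset under the key, with later queries depending arbitrarily on earlier queries and responses; the total number of values in all responses plus the number of empty-response queries is at most $S$; it then writes at most $S$ key-value pairs to $\mathcal{D}_r$ as an arbitrary function of its queries and responses. In every round, on every input, at most $S$ values are written under any single key (a machine exceeding its budget stops querying and writes nothing). A deterministic algorithm computes $g$ in $R$ rounds if for every valid input $x$, $\mathcal{D}_R$ contains exactly the single pair $(\textsc{answer},g(x))$. A randomized AMPC algorithm is a probability distribution over deterministic AMPC algorithms; its number of rounds is the maximum over the support; it computes $g$ with error at most $\delta$ if for each valid input $x$ it outputs $g(x)$ (i.e. $\mathcal{D}_R$ is exactly $\{(\textsc{answer},g(x))\}$) with probability at least $1-\delta$. A polynomial $p$ approximately represents $g$ if $|p(x)-g(x)|\le 1/3$ for all $x\in\{0,1\}^N$; the approximate degree $\widetilde{\deg}(g)$ is the minimum degree of such a $p$. *)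

From HB Require Import structures.
From mathcomp Require Import all_boot all_order all_algebra.
From mathcomp Require Import mpoly.
From mathcomp Require Import all_classical all_reals all_analysis.
Set Implicit Arguments. Unset Strict Implicit. Unset Printing Implicit Defensive.
Import Order.TTheory GRing.Theory Num.Theory.

(* Keys and values are natural numbers (any finitary data can be encoded).  *)
(* A DDS maps each key to the multiset of values stored under it; a         *)
(* multiset of nats is represented canonically by its sorted list.          *)

Definition dds := nat -> seq nat.

Definition history := seq (nat * seq nat).

(* A deterministic machine: adaptive query strategy (None = stop querying)
   and the key-value pairs it writes, as a function of its history. *)
Record machine := Machine {
  mquery : history -> option nat;
  mwrite : history -> seq (nat * nat)
}.

Definition round_prog := seq machine.
Definition det_alg := seq round_prog.

Definition ANSWER : nat := 0.

Definition query_cost (r : seq nat) : nat := maxn 1 (size r).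

(* Since each query costs >= 1, fuel S.+1 is never exhausted. *)
Fixpoint run_queries (q : history -> option nat) (D : dds) (S : nat)
    (fuel c : nat) (h : history) : option history :=
  match fuel with
  | 0 => None
  | fuel'.+1 =>
    match q h with
    | None => Some h
    | Some k =>
        let r := D k in
        let c' := c + query_cost r in
        if c' <= S then run_queries q D S fuel' c' (rcons h (k, r)) else None
    end
  end.

Definition machine_writes (S : nat) (D : dds) (M : machine) : seq (nat * nat) :=
  match run_queries (mquery M) D S S.+1 0 [::] with
  | Some h => take S (mwrite M h)
  | None => [::]
  end.

Definition dds_of (ws : seq (nat * nat)) : dds :=
  fun k => sort leq [seq p.2 | p <- ws & p.1 == k].

Definition round_step (S : nat) (rp : round_prog) (D : dds) : dds :=
  dds_of (flatten [seq machine_writes S D M | M <- rp]).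

Definition input_dds (N : nat) (x : 'I_N -> bool) : dds :=
  fun k => match k with
           | 0 => [::]
           | k'.+1 => if (insub k' : option 'I_N) is Some i
                      then [:: nat_of_bool (x i)] else [::]
           end.

Definition dds_after (S N : nat) (A : det_alg) (x : 'I_N -> bool) (r : nat) : dds :=
  foldl (fun D rp => round_step S rp D) (input_dds x) (take r A).

Definition final_dds (S N : nat) (A : det_alg) (x : 'I_N -> bool) : dds :=
  dds_after S A x (size A).

Definition valid_alg (S N : nat) (A : det_alg) : Prop :=
  forall (x : 'I_N -> bool) (r : nat), 0 < r <= size A ->
    forall k : nat, size (dds_after S A x r k) <= S.

Definition outputs (S N : nat) (A : det_alg) (x : 'I_N -> bool) (b : bool) : Prop :=
  forall k : nat,
    final_dds S A x k = if k == ANSWER then [:: nat_of_bool b] else [::].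

(* A randomized AMPC algorithm: a probability distribution over deterministic
   algorithms, given as a random variable  alg : Omega -> det_alg  on a
   probability space (Omega, P). *)
Definition rand_alg_rounds {d : measure_display} {Omega : measurableType d}
    (alg : Omega -> det_alg) (R : nat) : Prop :=
  (forall w, size (alg w) <= R) /\ (exists w, size (alg w) = R).

Definition rand_computes {R : realType} {d : measure_display}
    {Omega : measurableType d} (P : probability Omega R)
    (S N : nat) (alg : Omega -> det_alg) (g : ('I_N -> bool) -> bool)
    (delta : R) : Prop :=
  (forall w, valid_alg S N (alg w)) /\
  forall x : 'I_N -> bool,
    let E := [set w : Omega | outputs S (alg w) x (g x)]%classic in
    measurable E /\ (P E >= (1 - delta)%:E)%E.

(* degree of p, and msize 0 = 0.)                                           *)

Definition approx_represents {R : realType} (N : nat) (p : {mpoly R[N]})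
    (g : ('I_N -> bool) -> bool) : Prop :=
  forall x : 'I_N -> bool,
    (`| p.@[fun i => (x i)%:R] - (g x)%:R | <= (3^-1 : R))%R.

Definition approx_deg_le (R : realType) (N : nat)
    (g : ('I_N -> bool) -> bool) (D : nat) : Prop :=
  exists p : {mpoly R[N]}, (msize p <= D.+1)%N /\ approx_represents p g.

(* Call a function F on the cube {0,1}^N of level degree at most D when every
   indicator [F x = t] is a polynomial of degree at most D.  Level degrees add
   under composition, and one AMPC round multiplies the level degree of the DDS
   contents by S^2.  A machine's query history is decided by at most S adaptive
   lookups (factor S).  The content of a key is a sorted list C x of at most S
   values, so [C x = L] is the product over values v of [n_v x = l_v], where
   n_v x counts v in C x; expanding each factor by binomial inversion,
   [n = l] = sum_j (-1)^(j-l) C(j,l) C(n,j), and using sum_v n_v x <= S, only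
   products of binomials of total order at most S survive (factor S).  So the
   answer bit of an R-round deterministic algorithm has degree at most S^(2R).
   Grouping the random choices of a randomized algorithm by the set of inputs on
   which they answer correctly turns it into a finite mixture of deterministic
   algorithms; the same mixture of their answer polynomials is within the error
   1/3 of g. *)

From HB Require Import structures.
From mathcomp Require Import all_boot all_order all_algebra.
From mathcomp Require Import mpoly.
From mathcomp Require Import all_classical all_reals all_analysis.
From mathcomp Require Import zify ring lra.
Import Order.TTheory GRing.Theory Num.Theory.

Set Implicit Arguments.
Unset Strict Implicit.
Unset Printing Implicit Defensive.

Local Open Scope ring_scope.

Lemma mul_bin_bin n j l : (l <= j)%N ->
  ('C(n, j) * 'C(j, l) = 'C(n, l) * 'C(n - l, j - l))%N.
Proof.
move=> le_lj; have [le_jn|lt_nj] := leqP j n; last first.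
  rewrite [in LHS]bin_small // mul0n; have [le_ln|lt_nl] := leqP l n.
    by rewrite [X in (_ * X)%N]bin_small ?muln0 //; lia.
  by rewrite bin_small.
have fact_gt0 : (0 < l`! * (j - l)`! * (n - j)`!)%N by rewrite !muln_gt0 !fact_gt0.
apply/eqP; rewrite -(eqn_pmul2r fact_gt0); apply/eqP; transitivity n`!.
  rewrite (_ : _ * _ * _ = 'C(n, j) * ('C(j, l) * (l`! * (j - l)`!)) * (n - j)`!)%N;
    last by ring.
  by rewrite bin_fact // -mulnA bin_fact.
have -> : (n - j = (n - l) - (j - l))%N by lia.
rewrite (_ : _ * _ * _ =
  'C(n, l) * l`! * ('C(n - l, j - l) * ((j - l)`! * (n - l - (j - l))`!)))%N; last by ring.
by rewrite bin_fact ?leq_sub2r // -mulnA bin_fact // (leq_trans le_lj).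
Qed.

Lemma sum_alternating_bin (R : pzRingType) K m : (m < K)%N ->
  \sum_(i < K) (-1) ^+ i * 'C(m, i)%:R = (m == 0)%:R :> R.
Proof.
move=> lt_mK; have := exprD1n (-1 : R) m; rewrite addNr expr0n => ->.
rewrite (big_ord_widen K (fun i => (-1) ^+ i *+ 'C(m, i)) lt_mK) [RHS]big_mkcond /=.
apply: eq_bigr => i _; rewrite mulr_natr; case: ltnP => // lt_mi.
by rewrite bin_small.
Qed.

Lemma sum_bin_inversion (R : pzRingType) K n l : (n < K)%N ->
  \sum_(j < K) (-1) ^+ (j - l) * 'C(j, l)%:R * 'C(n, j)%:R = (n == l)%:R :> R.
Proof.
move=> lt_nK; have [lt_nl|le_ln] := ltnP n l.
  rewrite (ltn_eqF lt_nl) big1 // => j _; have [lt_jl|le_lj] := ltnP j l.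
    by rewrite bin_small // mulr0 mul0r.
  by rewrite (@bin_small n j) ?mulr0 // (leq_trans lt_nl le_lj).
have le_lK : (l <= K)%N by rewrite (leq_trans le_ln) // ltnW.
rewrite -(big_mkord xpredT (fun j => (-1) ^+ (j - l) * 'C(j, l)%:R * 'C(n, j)%:R)).
rewrite (big_cat_nat (leq0n l) le_lK) /=.
rewrite big_nat big1 ?add0r => [|j /andP[_ lt_jl]]; last by rewrite bin_small // mulr0 mul0r.
rewrite -{1}[l]add0n big_addn.
transitivity ('C(n, l)%:R * \sum_(i < K - l) (-1) ^+ i * 'C(n - l, i)%:R : R).
  rewrite big_mkord big_distrr /=; apply: eq_bigr => i _.
  by rewrite addnK -mulrA -natrM mulnC mul_bin_bin ?leq_addl // addnK natrM !mulr_natl mulrnAr.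
rewrite sum_alternating_bin; last by lia.
rewrite subn_eq0; have [->|ne_nl] := eqVneq n l; first by rewrite leqnn binn mulr1.
by rewrite leqNgt ltn_neqAle eq_sym ne_nl le_ln mulr0.
Qed.

Lemma natr_ffact (R : pzRingType) m j :
  (m ^_ j)%:R = \prod_(i < j) (m%:R - i%:R) :> R.
Proof.
elim: j => [|j IHj]; first by rewrite ffactn0 big_ord0.
rewrite ffactnSr natrM big_ord_recr /= -IHj.
have [le_jm|/ffact_small->] := leqP j m; first by rewrite natrB.
by rewrite !mul0r.
Qed.

Lemma natr_forall (R : comPzRingType) (I : finType) (P : pred I) :
  [forall i, P i]%:R = \prod_i (P i)%:R :> R.
Proof.
have [/forallP allP|] := boolP [forall i, P i].
  by rewrite big1 // => i _; rewrite allP.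
by rewrite negb_forall => /existsP[i /negbTE Pi_false]; rewrite (bigD1 i) //= Pi_false mul0r.
Qed.

Lemma sum_count_mem (T : eqType) (s t : seq T) : uniq s ->
  (\sum_(v <- s) count_mem v t)%N = count (mem s) t.
Proof.
elim: s => [|v s IHs] /=; first by rewrite big_nil count_pred0.
move=> /andP[vNs s_uniq]; rewrite big_cons IHs // -count_predUI.
have -> : count (predI (pred1 v) (mem s)) t = 0%N.
  rewrite (@eq_count _ _ pred0) ?count_pred0 // => y /=.
  by apply/negbTE; apply: contra vNs => /andP[/eqP->].
by rewrite addn0; apply: eq_count => y; rewrite /= in_cons.
Qed.

Section CubeDegree.
Variables (R : numFieldType) (N : nat).
Local Notation cube := ('I_N -> bool).

Definition deg_le (D : nat) (f : cube -> R) : Prop :=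
  exists p : {mpoly R[N]},
    (msize p <= D.+1)%N /\ forall x : cube, p.@[fun i => (x i)%:R] = f x.

Lemma deg_le_eq D f f' : f =1 f' -> deg_le D f -> deg_le D f'.
Proof. by move=> ef [p [sp ep]]; exists p; split=> // x; rewrite ep ef. Qed.

Lemma deg_le_leq D D' f : (D <= D')%N -> deg_le D f -> deg_le D' f.
Proof. by move=> leDD' [p [sp ep]]; exists p; split=> //; rewrite (leq_trans sp) ?ltnS. Qed.

Lemma deg_le_cst D c : deg_le D (fun _ => c).
Proof.
exists c%:MP; split=> [|x]; last exact: mevalC.
by rewrite msizeC; case: (c != 0).
Qed.

Lemma deg_le_coord i : deg_le 1 (fun x => (x i)%:R).
Proof. by exists 'X_i; rewrite msizeX mdeg1; split=> // x; rewrite mevalXU. Qed.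

Lemma deg_le_add D f f' :
  deg_le D f -> deg_le D f' -> deg_le D (fun x => f x + f' x).
Proof.
move=> [p [sp ep]] [p' [sp' ep']]; exists (p + p'); split=> [|x].
  by apply: leq_trans (msizeD_le _ _) _; rewrite geq_max sp sp'.
by rewrite mevalD ep ep'.
Qed.

Lemma deg_le_scale D c f : deg_le D f -> deg_le D (fun x => c * f x).
Proof.
move=> [p [sp ep]]; exists (c *: p); split=> [|x]; last by rewrite mevalZ ep.
exact: leq_trans (msizeZ_le _ _) sp.
Qed.

Lemma deg_le_mul D D' f f' :
  deg_le D f -> deg_le D' f' -> deg_le (D + D') (fun x => f x * f' x).
Proof.
move=> [p [sp ep]] [p' [sp' ep']]; exists (p * p'); split=> [|x]; last first.
  by rewrite mevalM ep ep'.
have [->|p_neq0] := eqVneq p 0; first by rewrite mul0r msize0.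
have [->|p'_neq0] := eqVneq p' 0; first by rewrite mulr0 msize0.
by rewrite msizeM //; move: (msize p) (msize p') sp sp' => m m'; lia.
Qed.

Lemma deg_le_sum D (I : Type) (r : seq I) (F : I -> cube -> R) :
  (forall i, deg_le D (F i)) -> deg_le D (fun x => \sum_(i <- r) F i x).
Proof.
move=> degF; elim: r => [|i r IHr].
  by apply: deg_le_eq (deg_le_cst D 0) => x; rewrite big_nil.
by apply: deg_le_eq (deg_le_add (degF i) IHr) => x; rewrite big_cons.
Qed.

Lemma deg_le_prod (I : Type) (r : seq I) (F : I -> cube -> R) (D : I -> nat) :
  (forall i, deg_le (D i) (F i)) ->
  deg_le (\sum_(i <- r) D i)%N (fun x => \prod_(i <- r) F i x).
Proof.
move=> degF; elim: r => [|i r IHr].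
  by rewrite big_nil; apply: deg_le_eq (deg_le_cst 0 1) => x; rewrite big_nil.
by rewrite big_cons; apply: deg_le_eq (deg_le_mul (degF i) IHr) => x; rewrite big_cons.
Qed.

Definition level_deg_le (T : eqType) (D : nat) (F : cube -> T) : Prop :=
  forall t, deg_le D (fun x => (F x == t)%:R).

Lemma level_deg_le_leq (T : eqType) D D' (F : cube -> T) :
  (D <= D')%N -> level_deg_le D F -> level_deg_le D' F.
Proof. by move=> leDD' degF t; apply: deg_le_leq leDD' (degF t). Qed.

Lemma level_deg_le_cst (T : eqType) D (c : T) : level_deg_le D (fun _ => c).
Proof. by move=> t; apply: deg_le_cst. Qed.

Definition cube_image (T : eqType) (F : cube -> T) : seq T :=
  undup [seq F y | y : {ffun 'I_N -> bool}].

Lemma cube_imageP (T : eqType) (F : cube -> T) x : F x \in cube_image F.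
Proof.
have -> : x = [ffun i => x i] :> cube by apply: funext => i; rewrite ffunE.
by rewrite mem_undup; apply: map_f; rewrite mem_enum.
Qed.

Lemma deg_le_bind (T : eqType) D D' (F : cube -> T) (phi : T -> cube -> R) :
  level_deg_le D F -> (forall t, deg_le D' (phi t)) ->
  deg_le (D + D') (fun x => phi (F x) x).
Proof.
move=> degF degphi.
apply: (@deg_le_eq _ (fun x => \sum_(t <- cube_image F) (F x == t)%:R * phi t x)).
  move=> x; rewrite (bigD1_seq (F x)) ?cube_imageP ?undup_uniq //= eqxx mul1r.
  by rewrite big1 ?addr0 // => t; rewrite eq_sym => /negbTE ->; rewrite mul0r.
by apply: deg_le_sum => t; apply: deg_le_mul.
Qed.

Lemma level_deg_le_bind (T U : eqType) D D' (F : cube -> T) (G : T -> cube -> U) :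
  level_deg_le D F -> (forall t, level_deg_le D' (G t)) ->
  level_deg_le (D + D') (fun x => G (F x) x).
Proof. by move=> degF degG u; apply: deg_le_bind degF (fun t => degG t u). Qed.

Lemma level_deg_le_map (T U : eqType) D (F : cube -> T) (h : T -> U) :
  level_deg_le D F -> level_deg_le D (fun x => h (F x)).
Proof.
move=> degF; rewrite -[D]addn0.
exact: level_deg_le_bind degF (fun t => level_deg_le_cst 0 (h t)).
Qed.

Lemma deg_le_map (T : eqType) D (F : cube -> T) (phi : T -> R) :
  level_deg_le D F -> deg_le D (fun x => phi (F x)).
Proof.
move=> degF; rewrite -[D]addn0.
exact: deg_le_bind degF (fun t => deg_le_cst 0 (phi t)).
Qed.

Lemma deg_le_bin e (n : cube -> nat) j :
  deg_le e (fun x => (n x)%:R) -> deg_le (j * e) (fun x => 'C(n x, j)%:R).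
Proof.
move=> degn; have -> : (j * e = \sum_(i < j) e)%N by rewrite sum_nat_const card_ord.
have deg_ffact :=
  deg_le_prod (index_enum 'I_j) (fun i => deg_le_add degn (deg_le_cst e (- i%:R))).
apply: deg_le_eq (deg_le_scale (j`!%:R)^-1 deg_ffact) => x.
by rewrite -natr_ffact -bin_ffact natrM mulrC mulfK // pnatr_eq0 -lt0n fact_gt0.
Qed.

Lemma deg_le_prod_bin (I : finType) (n : I -> cube -> nat) (T : I -> nat) S e :
  (forall x, \sum_i n i x <= S)%N -> (forall i, deg_le e (fun x => (n i x)%:R)) ->
  deg_le (S * e) (fun x => \prod_i 'C(n i x, T i)%:R).
Proof.
move=> sum_n_le degn; have [le_TS|lt_ST] := leqP (\sum_i T i) S.
  apply: deg_le_leq (deg_le_prod _ (fun i => deg_le_bin (T i) (degn i))).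
  by rewrite -big_distrl leq_mul2r le_TS orbT.
apply: deg_le_eq (deg_le_cst _ 0) => x.
have [i lt_nT] : exists i, (n i x < T i)%N.
  apply/existsP; apply: contraTT lt_ST; rewrite negb_exists => /forallP le_Tn.
  by rewrite -leqNgt (leq_trans _ (sum_n_le x)) // leq_sum // => i _; rewrite leqNgt le_Tn.
by rewrite (bigD1 i) //= bin_small // mul0r.
Qed.

Lemma deg_le_count_profile (I : finType) (n : I -> cube -> nat) (l : I -> nat) S e :
  (forall x, \sum_i n i x <= S)%N -> (forall i, deg_le e (fun x => (n i x)%:R)) ->
  deg_le (S * e) (fun x => [forall i, n i x == l i]%:R).
Proof.
move=> sum_n_le degn.
pose a i (j : 'I_S.+1) : R := (-1) ^+ (j - l i) * 'C(j, l i)%:R.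
apply: (@deg_le_eq _
  (fun x => \sum_(T : {ffun I -> 'I_S.+1}) (\prod_i a i (T i)) * \prod_i 'C(n i x, T i)%:R)).
  move=> x; rewrite natr_forall.
  transitivity (\prod_i \sum_(j < S.+1) a i j * 'C(n i x, j)%:R).
    by rewrite bigA_distr_bigA; apply: eq_bigr => T _; rewrite [RHS]big_split.
  apply: eq_bigr => i _.
  have le_nS : (n i x <= S)%N by rewrite (leq_trans _ (sum_n_le x)) // (bigD1 i) //= leq_addr.
  by rewrite -(sum_bin_inversion _ (l i) (le_nS : n i x < S.+1)%N).
by apply: deg_le_sum => T; apply: deg_le_scale; apply: deg_le_prod_bin.
Qed.

Lemma level_deg_le_sorted (C : cube -> seq nat) S e :
  (forall x, sorted leq (C x)) -> (forall x, size (C x) <= S)%N ->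
  (forall v, deg_le e (fun x => (count_mem v (C x))%:R)) -> level_deg_le (S * e) C.
Proof.
move=> C_sorted C_size degC L.
pose vs := undup (L ++ flatten (cube_image C)).
pose n (i : 'I_(size vs)) x := count_mem (nth 0%N vs i) (C x).
have vsP x v : v \in C x ++ L -> v \in vs.
  rewrite mem_undup !mem_cat orbC => /orP[->//|Cx_v].
  by apply/orP; right; apply/flattenP; exists (C x); rewrite ?cube_imageP.
have eq_CL x : (C x == L) = sorted leq L && [forall i, n i x == count_mem (nth 0%N vs i) L].
  apply/eqP/andP => [<-|[L_sorted /forallP count_eq]]; first by split; [|apply/forallP].
  apply: (sorted_eq leq_trans anti_leq (C_sorted x) L_sorted); apply/allP => v /vsP vs_v.
  have v_idx : (index v vs < size vs)%N by rewrite index_mem.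
  by have := count_eq (Ordinal v_idx); rewrite /n /= nth_index.
apply: (@deg_le_eq _ (fun x => (sorted leq L)%:R *
  [forall i, n i x == count_mem (nth 0%N vs i) L]%:R)) => [x|].
  by rewrite eq_CL -mulnb natrM.
apply: deg_le_scale; apply: deg_le_count_profile => [x|i]; last exact: degC.
rewrite (leq_trans _ (C_size x)) //.
rewrite -(big_mkord xpredT (fun i => count_mem (nth 0%N vs i) (C x))).
rewrite -(big_nth 0%N xpredT (fun v => count_mem v (C x))).
by rewrite sum_count_mem ?undup_uniq ?count_size.
Qed.

Lemma query_cost_gt0 r : (0 < query_cost r)%N.
Proof. by rewrite leq_max. Qed.

Lemma count_dds_of ws k v :
  count_mem v (dds_of ws k) = count [pred p | (p.1 == k) && (p.2 == v)] ws.
Proof.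
rewrite (permP (permEl (perm_sort leq _))) count_map count_filter.
by apply: eq_count => p; rewrite /= andbC.
Qed.

Lemma level_deg_le_coord i : level_deg_le 1 (fun x : cube => x i).
Proof.
case; first by apply: deg_le_eq (deg_le_coord i) => x; rewrite eqb_id.
have deg_not := deg_le_add (deg_le_cst 1 1) (deg_le_scale (-1) (deg_le_coord i)).
apply: deg_le_eq deg_not => x.
by case: (x i); rewrite /= ?mulr1n ?mulr0n mulN1r ?subrr ?subr0.
Qed.

Lemma level_deg_le_input k : level_deg_le 1 (fun x => input_dds x k).
Proof.
case: k => [|k]; first exact: level_deg_le_cst.
rewrite /input_dds; case: (insub k) => [i|]; last exact: level_deg_le_cst.
exact: level_deg_le_map (fun b : bool => [:: nat_of_bool b]) (level_deg_le_coord i).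
Qed.

Section Round.
Variables (D : cube -> dds) (d : nat).
Hypothesis degD : forall k, level_deg_le d (fun x => D x k).

(* Every query costs at least one unit, so at most [S - c] more responses are read. *)
Lemma level_deg_le_run_queries q S fuel c h :
  level_deg_le ((S - c) * d) (fun x => run_queries q (D x) S fuel c h).
Proof.
elim: fuel c h => [|fuel IHfuel] c h /=; first exact: level_deg_le_cst.
case: (q h) => [k|]; last exact: level_deg_le_cst.
have [le_Sc|lt_cS] := leqP S c.
  rewrite (_ : (fun x => _) = fun _ => None); first exact: level_deg_le_cst.
  apply: funext => x; have qc_gt0 := query_cost_gt0 (D x k).
  by rewrite ifF //; apply/negbTE; rewrite -ltnNge; lia.
rewrite (_ : (S - c) * d = d + (S - c).-1 * d)%N; last by rewrite -mulSn prednK ?subn_gt0.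
apply: (level_deg_le_bind (degD k) (G := fun r x =>
  if (c + query_cost r <= S)%N
  then run_queries q (D x) S fuel (c + query_cost r) (rcons h (k, r)) else None)) => r.
case: leqP => _; last exact: level_deg_le_cst.
apply: level_deg_le_leq (IHfuel _ _); rewrite leq_mul2r; apply/orP; right.
by have := query_cost_gt0 r; lia.
Qed.

Lemma level_deg_le_machine_writes S M :
  level_deg_le (S * d) (fun x => machine_writes S (D x) M).
Proof.
have := level_deg_le_run_queries (mquery M) S S.+1 0 [::]; rewrite subn0.
exact: level_deg_le_map (fun o => if o is Some h then take S (mwrite M h) else [::]).
Qed.

Lemma level_deg_le_round_step S rp :
  (forall x k, size (round_step S rp (D x) k) <= S)%N ->
  forall k, level_deg_le (S * (S * d)) (fun x => round_step S rp (D x) k).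
Proof.
move=> size_le k; apply: level_deg_le_sorted => // [x|v].
  exact/sort_sorted/leq_total.
pose hit := [pred p : nat * nat | (p.1 == k) && (p.2 == v)].
apply: (@deg_le_eq _ (fun x => \sum_(M <- rp) (count hit (machine_writes S (D x) M))%:R)).
  move=> x; rewrite count_dds_of count_flatten sumnE big_map natr_sum.
  by rewrite big_map.
apply: deg_le_sum => M.
exact: deg_le_map (fun ws => (count hit ws)%:R) (level_deg_le_machine_writes S M).
Qed.

End Round.

Lemma level_deg_le_dds_after S (A : det_alg) r k : valid_alg S N A -> (r <= size A)%N ->
  level_deg_le (S ^ (2 * r)) (fun x => dds_after S A x r k).
Proof.
move=> A_valid; elim: r k => [|r IHr] k le_rA.
  by rewrite muln0 expn0 /dds_after take0; exact: level_deg_le_input.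
have step (x : cube) : dds_after S A x r.+1 = round_step S (nth [::] A r) (dds_after S A x r).
  by rewrite /dds_after (take_nth [::] le_rA) foldl_rcons.
rewrite (_ : 2 * r.+1 = (2 * r).+2)%N ?expnS; last by lia.
under eq_fun do rewrite step.
apply: level_deg_le_round_step => [k'|x k']; first exact/IHr/ltnW.
by rewrite -step; apply: A_valid; rewrite le_rA.
Qed.

Lemma deg_le_answer S (A : det_alg) nR : valid_alg S N A -> (size A <= nR)%N ->
  deg_le (S ^ (2 * nR)) (fun x => (final_dds S A x ANSWER == [:: 1%N])%:R).
Proof.
move=> A_valid le_AnR; have [A0|A_gt0] := posnP (size A).
  apply: deg_le_eq (deg_le_cst _ 0) => x.
  by rewrite /final_dds /dds_after A0 take0.
apply: (deg_le_map (fun L => (L == [:: 1%N])%:R)).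
apply: level_deg_le_leq (@level_deg_le_dds_after S A (size A) ANSWER A_valid (leqnn _)).
case: S A_valid => [|S] _; first by rewrite exp0n ?muln_gt0.
by rewrite leq_pexp2l // leq_mul2l le_AnR.
Qed.

End CubeDegree.

Section FiniteValuedMap.
Context (R : realType) (d : measure_display) (Omega : measurableType d).
Variables (P : probability Omega R) (U : finType) (f : Omega -> U).
Local Open Scope classical_set_scope.
Hypothesis measurable_fiber : forall u, measurable (f @^-1` [set u]).

Definition pmass (u : U) : R := fine (P (f @^-1` [set u])).

Lemma pmass_ge0 u : 0 <= pmass u.
Proof. exact/fine_ge0/measure_ge0. Qed.

Lemma pmassE u : P (f @^-1` [set u]) = (pmass u)%:E.
Proof. by rewrite fineK // fin_num_measure. Qed.

Lemma preimage_cons u (s : seq U) :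
  [set w | f w \in u :: s] = f @^-1` [set u] `|` [set w | f w \in s].
Proof. by apply/funext => w /=; rewrite in_cons propeqE; split=> /predU1P. Qed.

Lemma measurable_preimage_seq (s : seq U) : measurable [set w | f w \in s].
Proof.
elim: s => [|u s IHs]; last by rewrite preimage_cons; exact: measurableU.
by rewrite (_ : [set w | _] = set0) //; apply/seteqP; split.
Qed.

Lemma measure_preimage_seq (s : seq U) : uniq s ->
  P [set w | f w \in s] = (\sum_(u <- s) pmass u)%:E.
Proof.
elim: s => [_|u s IHs /= /andP[uNs s_uniq]].
  by rewrite big_nil (_ : [set w | _] = set0) ?measure0 //; apply/seteqP; split.
rewrite big_cons EFinD -IHs // -pmassE preimage_cons measureU //.
  exact: measurable_preimage_seq.
by apply/seteqP; split=> // w [/= -> uS]; rewrite uS in uNs.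
Qed.

Lemma measure_preimage_pred (Q : pred U) :
  P [set w | Q (f w)] = (\sum_(u | Q u) pmass u)%:E.
Proof.
rewrite -big_filter -measure_preimage_seq ?filter_uniq ?index_enum_uniq //.
by congr (P _); apply/funext => w; rewrite /= mem_filter mem_index_enum andbT.
Qed.

Lemma sum_pmass : \sum_u pmass u = 1.
Proof.
have := measure_preimage_pred xpredT.
rewrite (_ : [set w | _] = setT) ?probability_setT; last by apply/seteqP; split.
by move=> -[<-].
Qed.

End FiniteValuedMap.

Section Derandomization.
Context (R : realType) (N : nat) (d : measure_display) (Omega : measurableType d).
Variables (P : probability Omega R) (D : nat) (delta : R).
Local Notation cube := ('I_N -> bool).
Local Notation point := {ffun 'I_N -> bool}.
Local Notation pattern := {ffun point -> bool}.
Variables (q : Omega -> cube -> R) (g : cube -> R) (E : cube -> set Omega).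
Local Open Scope classical_set_scope.
Hypothesis deg_q : forall w, deg_le D (q w).
Hypothesis measurable_E : forall x, measurable (E x).
Hypothesis measure_E : forall x, ((1 - delta)%:E <= P (E x))%E.
Hypothesis q_on_E : forall x w, E x w -> q w x = g x.
Hypothesis q_near_g : forall x w, `|q w x - g x| <= 1.

Definition success_pattern (w : Omega) : pattern := [ffun y : point => `[< E y w >]].

Lemma measurable_success_fiber u : measurable (success_pattern @^-1` [set u]).
Proof.
rewrite (_ : _ @^-1` _ = \bigcap_(y in [set: point]) if u y then E y else ~` E y).
  apply: fin_bigcap_measurable finite_finset _ => y _.
  by case: (u y); [exact: measurable_E | exact/measurableC/measurable_E].
apply/seteqP; split=> [w /= <- y _|w /= Fw]; first by rewrite ffunE; case: asboolP.
by apply/ffunP => y; rewrite ffunE; have := Fw y I; case: (u y); case: asboolP.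
Qed.

Local Notation pmass := (pmass P success_pattern).

Definition pattern_output u : cube -> R :=
  if pselect (exists w, success_pattern w = u) is left ex then q (projT1 (cid ex))
  else fun=> 0.

Lemma pattern_outputP u :
  pmass u = 0 \/ exists2 w, success_pattern w = u & pattern_output u = q w.
Proof.
rewrite /pattern_output; case: pselect => [ex|nex].
  by right; case: (cid ex) => w wu; exists w.
left; rewrite /pmass (_ : _ @^-1` _ = set0) ?measure0 //.
by apply/seteqP; split=> // w /= wu; apply: nex; exists w.
Qed.

Definition mixture (x : cube) : R := \sum_u pmass u * pattern_output u x.

Lemma deg_le_mixture : deg_le D mixture.
Proof.
apply: deg_le_sum => u; apply: deg_le_scale; rewrite /pattern_output.
by case: pselect => [ex|_]; [exact: deg_q | exact: deg_le_cst].
Qed.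

Lemma mixture_near x : `|mixture x - g x| <= delta.
Proof.
pose y : point := [ffun i => x i].
have E_y : E y = E x by congr E; apply: funext => i; rewrite ffunE.
have fail_mass : \sum_(u : pattern | ~~ u y) pmass u <= delta.
  have := measure_E x; rewrite -E_y (_ : E y = [set w | success_pattern w y]); last first.
    by apply/funext => w; rewrite /= ffunE asboolE.
  rewrite (measure_preimage_pred P measurable_success_fiber (fun u : pattern => u y)) lee_fin.
  have := sum_pmass P measurable_success_fiber.
  by rewrite (bigID (fun u : pattern => u y)) /=; lra.
have -> : mixture x - g x = \sum_(u : pattern | ~~ u y) pmass u * (pattern_output u x - g x).
  rewrite /mixture -[in LHS](mul1r (g x)) -(sum_pmass P measurable_success_fiber) mulr_suml.
  rewrite -sumrB (bigID (fun u : pattern => u y)) /= big1 ?add0r => [|u uy].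
    by apply: eq_bigr => u _; rewrite mulrBr.
  have [->|[w wu ->]] := pattern_outputP u; first by rewrite !mul0r subrr.
  by rewrite -mulrBr q_on_E ?subrr ?mulr0 // -E_y; move: uy; rewrite -wu ffunE => /asboolP.
apply: le_trans (ler_norm_sum _ _ _) (le_trans _ fail_mass); apply: ler_sum => u _.
rewrite normrM ger0_norm ?pmass_ge0 //; have [->|[w _ ->]] := pattern_outputP u.
  by rewrite mul0r.
by rewrite ler_piMr ?pmass_ge0 ?q_near_g.
Qed.

Lemma low_deg_poly_near : exists p : {mpoly R[N]},
  (msize p <= D.+1)%N /\ forall x : cube, `|p.@[fun i => (x i)%:R] - g x| <= delta.
Proof.
have [p [size_p eval_p]] := deg_le_mixture.
by exists p; split=> // x; rewrite eval_p; exact: mixture_near.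
Qed.

End Derandomization.

Lemma dist_natr_bool (R : numDomainType) (a b : bool) : `|a%:R - b%:R| <= 1 :> R.
Proof.
by case: a; case: b; rewrite /= ?mulr1n ?mulr0n ?subrr ?subr0 ?sub0r ?normrN ?normr1 ?normr0.
Qed.

Theorem theorem3p4 (R : realType) (N : nat) (g : ('I_N -> bool) -> bool)
    (S nR : nat) (d : measure_display) (Omega : measurableType d)
    (P : probability Omega R) (alg : Omega -> det_alg) :
  rand_alg_rounds alg nR ->
  rand_computes P S alg g (3^-1 : R) ->
  approx_deg_le R g (S ^ (2 * nR)).
Proof.
move=> [size_alg _] [alg_valid correct].
pose answer w (x : 'I_N -> bool) : R := (final_dds S (alg w) x ANSWER == [:: 1%N])%:R.
have answer_correct x w : outputs S (alg w) x (g x) -> answer w x = (g x)%:R.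
  by move=> /(_ ANSWER) out_ANSWER; rewrite /answer out_ANSWER; case: (g x).
have [p [size_p near_p]] := low_deg_poly_near (P := P) (q := answer)
  (E := fun x => [set w | outputs S (alg w) x (g x)]%classic)
  (fun w => @deg_le_answer R N S (alg w) nR (alg_valid w) (size_alg w))
  (fun x => (correct x).1) (fun x => (correct x).2) answer_correct
  (fun x w => dist_natr_bool _ _ _).
by exists p.
Qed.
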